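(* Let $k\ge4$ be an integer. Every $k$-ring contains a hole of length $k$.
   Context: Graphs are finite and simple. A hole is an induced cycle on at least four vertices; its length is its number of vertices. For $k\ge4$, a $k$-ring is a graph $R$ whose vertex set can be partitioned into nonempty sets $X_0,\dots,X_{k-1}$ (indices in $\mathbb{Z}_k$) such that for each $i$, $X_i$ can be ordered as $u^i_1,\dots,u^i_{|X_i|}$ so that $X_i\subseteq N_R[u^i_{|X_i|}]\subseteq\dots\subseteq N_R[u^i_1]=X_{i-1}\cup X_i\cup X_{i+1}$, where $N_R[v]$ denotes the closed neighbourhood of $v$. *)

From mathcomp Require Import all_boot.
Set Implicit Arguments. Unset Strict Implicit. Unset Printing Implicit Defensive.

Definition simple_graph (T : finType) (e : rel T) : Prop :=
  symmetric e /\ irreflexive e.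

Definition cnbhd (T : finType) (e : rel T) (x : T) : {set T} :=
  [set y | (y == x) || e x y].

Definition has_hole_of_length (T : finType) (e : rel T) (k : nat) : Prop :=
  exists c : 'I_k -> T, injective c /\
    forall i j : 'I_k, e (c i) (c j) = (j == ordS i) || (i == ordS j).

(* k-ring: partition X_0,...,X_{k-1} (given by the class map f : T -> 'I_k,
   X_i = f^{-1}(i)), each X_i nonempty, listed as s i = [u_1; ...; u_m] without
   repetition, with X_i ⊆ N[u_m] ⊆ ... ⊆ N[u_1] = X_{i-1} ∪ X_i ∪ X_{i+1}. *)
Definition part (T : finType) (k : nat) (f : T -> 'I_k) (i : 'I_k) : {set T} :=
  [set x | f x == i].

(* The ordering of X_i is  h i :: r i  (so X_i is nonempty); the chain
   N[u_{j+1}] ⊆ N[u_j] is expressed as a path of the relation below. *)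
Definition nbhd_sub (T : finType) (e : rel T) : rel T :=
  fun a b => cnbhd e b \subset cnbhd e a.

Definition is_ring (T : finType) (e : rel T) (k : nat) : Prop :=
  exists (f : T -> 'I_k) (h : 'I_k -> T) (r : 'I_k -> seq T),
    forall i : 'I_k,
      [/\ uniq (h i :: r i),
          (forall x, (x \in h i :: r i) = (f x == i)),
          path (nbhd_sub e) (h i) (r i),
          part f i \subset cnbhd e (last (h i) (r i)) &
          cnbhd e (h i) = part f (ord_pred i) :|: part f i :|: part f (ordS i)].

From mathcomp Require Import all_boot.

Set Implicit Arguments.
Unset Strict Implicit.
Unset Printing Implicit Defensive.

(* The first vertices u^i_1 of the classes form the hole: since
   N[u^i_1] = X_{i-1} ∪ X_i ∪ X_{i+1}, the vertex u^j_1 (j <> i) is adjacent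
   to u^i_1 exactly when j = i ± 1. *)

Lemma ordS_neq (k : nat) (i : 'I_k) : 1 < k -> ordS i != i.
Proof.
move=> k_gt1; apply/eqP => /(congr1 val) /= Si.
have : 1 + i == 0 + i %[mod k] by rewrite add1n add0n Si modn_small.
by rewrite eqn_modDr !modn_small // ltnW.
Qed.

Lemma eq_ord_pred (k : nat) (i j : 'I_k) : (j == ord_pred i) = (i == ordS j).
Proof. by rewrite -(can2_eq (@ordSK k) (@ord_predK k)) eq_sym. Qed.

Lemma cyclic_transversal_hole (T : finType) (e : rel T) (k : nat)
    (f : T -> 'I_k) (h : 'I_k -> T) :
  1 < k -> irreflexive e -> cancel h f ->
  (forall i, cnbhd e (h i) = part f (ord_pred i) :|: part f i :|: part f (ordS i)) ->
  has_hole_of_length e k.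
Proof.
move=> k_gt1 e_irr hK Nh; exists h; split; first exact: can_inj hK.
move=> i j; have [<-|neq_ij] := eqVneq i j.
  by rewrite e_irr eq_sym (negbTE (ordS_neq i k_gt1)).
have hj_neq_hi : (h j == h i) = false.
  by rewrite (inj_eq (can_inj hK)) eq_sym (negbTE neq_ij).
have := erefl (h j \in cnbhd e (h i)); rewrite {2}Nh.
by rewrite !inE !hK hj_neq_hi /= [j == i]eq_sym (negbTE neq_ij) eq_ord_pred orbF orbC => ->.
Qed.

Theorem proposition6p4 (k : nat) (T : finType) (e : rel T) :
  4 <= k -> simple_graph e -> is_ring e k -> has_hole_of_length e k.
Proof.
move=> k_ge4 [_ e_irr] [f [h [r ring_fhr]]].
have hK : cancel h f.
  by move=> i; have [_ memX _ _ _] := ring_fhr i; apply/eqP; rewrite -memX mem_head.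
apply: (cyclic_transversal_hole _ e_irr hK); first exact: leq_trans k_ge4.
by move=> i; have [_ _ _ _ ->] := ring_fhr i.
Qed.
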